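(* Let $t$ be the Thue-Morse word and $PPL_t$ its prefix palindromic length function. Then for all integers $n\geq 0$: \begin{align*} PPL_t(4n)&=PPL_t(n),\\ PPL_t(4n+1)&=PPL_t(n)+1,\\ PPL_t(4n+2)&=\min(PPL_t(n),PPL_t(n+1))+2,\\ PPL_t(4n+3)&=PPL_t(n+1)+1. \end{align*}
   Context: A palindrome is a finite word $p=p[1]\cdots p[n]$ with $p[i]=p[n-i+1]$ for all $i$. The palindromic length of a finite word $s$ is the minimal number $k$ such that $s$ is a concatenation of $k$ nonempty palindromes (the empty word has palindromic length $0$). For an infinite word $u=u[1]u[2]\cdots$, $PPL_u(n)$ denotes the palindromic length of its prefix $u[1]\cdots u[n]$ of length $n$, with $PPL_u(0)=0$. The Thue-Morse word $t=abbabaabbaababba\cdots$ is the fixed point starting with $a$ of the morphism $\tau: a\mapsto abba,\ b\mapsto baab$. *)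

From mathcomp Require Import all_boot.
Set Implicit Arguments. Unset Strict Implicit. Unset Printing Implicit Defensive.

(* Letters: a = false, b = true. *)
Definition palindrome (s : seq bool) : bool := rev s == s.

Fixpoint pal_split (k : nat) (s : seq bool) : bool :=
  match k with
  | 0 => s == [::]
  | k'.+1 => has (fun i => palindrome (take i.+1 s) && pal_split k' (drop i.+1 s))
                 (iota 0 (size s))
  end.

Lemma pal_split_exists (s : seq bool) : exists k, pal_split k s.
Proof.
exists (size s); elim: s => [|x s IH] //.
rewrite [size _]/=.
change (has (fun i => palindrome (take i.+1 (x :: s)) && pal_split (size s) (drop i.+1 (x :: s)))
          (iota 0 (size s).+1)).
apply/hasP; exists 0; first by rewrite mem_iota.
by rewrite /= drop0 take0 IH andbT /palindrome.
Qed.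

Definition pal_length (s : seq bool) : nat := ex_minn (pal_split_exists s).

Definition tau (s : seq bool) : seq bool :=
  flatten [seq [:: x; ~~ x; ~~ x; x] | x <- s].

(* tau^k(a); it has length 4^k and is a prefix of the fixed point *)
Definition tau_iter (k : nat) : seq bool := iter k tau [:: false].

(* the Thue-Morse word t, 0-indexed: t i = letter t[i+1] *)
Definition thue_morse (i : nat) : bool := nth false (tau_iter i) i.

Definition prefix_tm (n : nat) : seq bool := mkseq thue_morse n.

Definition PPL_t (n : nat) : nat := pal_length (prefix_tm n).

(* A palindromic factor t[a, b) of the Thue-Morse word has length 1 or 3, or even
   length with a + b divisible by 4: t contains neither aaa nor bbb, hence no
   palindrome of length 5, and the two middle letters t(c - 1) = t(c) of an even
   palindrome force c to be even, since t(2j) <> t(2j + 1).  Trimmed to the nearest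
   multiples of 4, such an even palindrome is the tau-image of a palindrome of t, and
   tau maps palindromes to palindromes.  So the last palindrome of an optimal
   decomposition of the prefix of length 4n + r leads back to a prefix of length about
   n, which gives the lower bounds by strong induction; the upper bounds come from
   applying tau to the last palindrome of an optimal decomposition of the prefix of
   length n or n + 1. *)

From mathcomp Require Import all_boot zify.

Set Implicit Arguments.
Unset Strict Implicit.
Unset Printing Implicit Defensive.

Local Notation tm := thue_morse.

(** * Letters of the Thue-Morse word *)

Definition tau_block (x : bool) : seq bool := [:: x; ~~ x; ~~ x; x].

Lemma tau_cons x s : tau (x :: s) = tau_block x ++ tau s.
Proof. by []. Qed.

Lemma tau_cat s u : tau (s ++ u) = tau s ++ tau u.
Proof. by rewrite /tau map_cat flatten_cat. Qed.

Lemma size_tau s : size (tau s) = 4 * size s.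
Proof. by elim: s => [|x s IH] //; rewrite tau_cons size_cat IH mulnS. Qed.

Lemma size_tau_iter k : size (tau_iter k) = 4 ^ k.
Proof. by elim: k => [|k IH] //; rewrite /tau_iter iterS size_tau IH expnS. Qed.

Lemma tau_iterS_cat k : exists u, tau_iter k.+1 = tau_iter k ++ u.
Proof.
elim: k => [|k [u IH]]; first by exists [:: true; true; false].
exists (tau u); change (tau (tau_iter k.+1) = tau (tau_iter k) ++ tau u).
by rewrite IH tau_cat.
Qed.

Lemma nth_tau_iter_leq k l i : k <= l -> i < 4 ^ k ->
  nth false (tau_iter l) i = nth false (tau_iter k) i.
Proof.
move=> /subnKC <-; elim: (l - k) => [|d IH] lt_i; first by rewrite addn0.
rewrite addnS; have [u ->] := tau_iterS_cat (k + d).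
by rewrite nth_cat size_tau_iter (leq_trans lt_i) ?IH // leq_pexp2l ?leq_addr.
Qed.

Lemma tm_nth_tau_iter k i : i < 4 ^ k -> tm i = nth false (tau_iter k) i.
Proof.
move=> lt_i; rewrite /thue_morse; case: (leqP k i) => [le_ki | lt_ik].
  by rewrite (nth_tau_iter_leq le_ki).
by rewrite (nth_tau_iter_leq (ltnW lt_ik)) // ltn_expl.
Qed.

Lemma nth_tau s j r : j < size s -> r < 4 ->
  nth false (tau s) (4 * j + r) = nth false (tau_block (nth false s j)) r.
Proof.
elim: s j => [|x s IH] [|j] // lt_j lt_r; rewrite tau_cons nth_cat.
  by rewrite muln0 add0n lt_r.
by rewrite mulnS -addnA ltnNge leq_addr addKn IH.
Qed.

Lemma tm_block j r : r < 4 ->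
  tm (4 * j + r) = nth false (tau_block (tm j)) r.
Proof.
move=> lt_r; have lt_j : j < 4 ^ j by rewrite ltn_expl.
rewrite (@tm_nth_tau_iter j.+1); last by rewrite expnS; lia.
by rewrite [tau_iter _]/= nth_tau ?size_tau_iter.
Qed.

Lemma tm_4mul j : tm (4 * j) = tm j.
Proof. by rewrite -[4 * j]addn0 tm_block. Qed.

Lemma tm_4mul1 j : tm (4 * j + 1) = ~~ tm j.
Proof. by rewrite tm_block. Qed.

Lemma tm_4mul2 j : tm (4 * j + 2) = ~~ tm j.
Proof. by rewrite tm_block. Qed.

Lemma tm_4mul3 j : tm (4 * j + 3) = tm j.
Proof. by rewrite tm_block. Qed.

Lemma parity_cases (P : nat -> Prop) :
  (forall u, P (2 * u)) -> (forall u, P (2 * u + 1)) -> forall j, P j.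
Proof.
move=> Peven Podd j; rewrite -[j]odd_double_half -mul2n addnC.
by case: (odd j); [apply: Podd | rewrite addn0; apply: Peven].
Qed.

Lemma tm_2mul_2mul1 j : tm (2 * j) = tm j /\ tm (2 * j + 1) = ~~ tm j.
Proof.
elim/ltn_ind: j => j; elim/parity_cases: j => u IH.
- have tm2u : tm (2 * u) = tm u.
    by case: (posnP u) => [-> // | u_gt0]; case: (IH u) => //; lia.
  by rewrite mulnA -[2 * 2]/4 tm_4mul tm_4mul1 tm2u.
- have -> : 2 * (2 * u + 1) = 4 * u + 2 by lia.
  rewrite -addnA tm_4mul2 tm_4mul3.
  by case: (IH u) => [|_ ->]; [lia | rewrite negbK].
Qed.

Lemma tm_2mul j : tm (2 * j) = tm j.
Proof. by case: (tm_2mul_2mul1 j). Qed.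

Lemma tm_2mul1 j : tm (2 * j + 1) = ~~ tm j.
Proof. by case: (tm_2mul_2mul1 j). Qed.

Lemma tm_no_three_equal j : ~ (tm j = tm j.+1 /\ tm j.+1 = tm j.+2).
Proof.
elim/parity_cases: j => u [eq01 eq12].
- by move: eq01; rewrite -[(2 * u).+1]addn1 tm_2mul tm_2mul1; case: (tm u).
- move: eq12; have -> : (2 * u + 1).+1 = 2 * u.+1 by lia.
  by rewrite -[(2 * u.+1).+1]addn1 tm_2mul tm_2mul1; case: (tm u.+1).
Qed.

(** * Palindromic factors *)

Definition tm_pal (a b : nat) : Prop := forall i, a <= i < b -> tm i = tm (a + b - 1 - i).

Lemma tm_palE a b i j : tm_pal a b -> a <= i < b -> i + j = a + b - 1 -> tm i = tm j.
Proof. by move=> pal_ab i_ab ij; rewrite pal_ab //; congr tm; lia. Qed.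

Lemma tm_pal_short a b : b <= a.+1 -> tm_pal a b.
Proof. by move=> le_ba i i_ab; congr tm; lia. Qed.

Lemma tm_pal_shrink a b a' b' : tm_pal a b -> a <= a' -> a' + b' = a + b -> tm_pal a' b'.
Proof. by move=> pal_ab le_aa' eq_ab i i_ab; apply: (tm_palE pal_ab); lia. Qed.

Lemma tm_pal_grow k n : 0 < k -> tm_pal k n -> tm k.-1 = tm n -> tm_pal k.-1 (n + 1).
Proof.
move=> k_gt0 pal_kn ends i i_kn.
have [lt_ik | eq_ik] : k <= i \/ i = k.-1 by lia.
  have [lt_in | ->] : i < n \/ i = n by lia.
    by apply: (tm_palE pal_kn); lia.
  by rewrite -ends; congr tm; lia.
by rewrite eq_ik ends; congr tm; lia.
Qed.

Lemma tm_pal_4mul k n : tm_pal (4 * k) (4 * n) <-> tm_pal k n.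
Proof.
split=> [pal4 i i_kn | pal_kn i i_kn].
  by rewrite -(tm_4mul i) -(tm_4mul3 (k + n - 1 - i)); apply: (tm_palE pal4); lia.
have [j [r [ei lt_r]]] : exists j r, i = 4 * j + r /\ r < 4.
  by exists (i %/ 4), (i %% 4); lia.
subst i.
have -> : 4 * k + 4 * n - 1 - (4 * j + r) = 4 * (k + n - 1 - j) + (3 - r) by lia.
rewrite !tm_block ?(pal_kn j); try lia.
by case: r lt_r {i_kn} => [|[|[|[|]]]].
Qed.

Lemma tm_no_pal5 j : ~ tm_pal j (j + 5).
Proof.
elim/parity_cases: j => u /tm_palE palE; case: (@tm_no_three_equal u).
- have outer : tm (2 * u) = tm (2 * u.+2) by apply: palE; lia.
  have inner : tm (2 * u + 1) = tm (2 * u.+1 + 1) by apply: palE; lia.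
  move: outer inner; rewrite !tm_2mul !tm_2mul1.
  by case: (tm u); case: (tm u.+1); case: (tm u.+2).
- have outer : tm (2 * u + 1) = tm (2 * u.+2 + 1) by apply: palE; lia.
  have inner : tm (2 * u.+1) = tm (2 * u.+2) by apply: palE; lia.
  move: outer inner; rewrite !tm_2mul !tm_2mul1.
  by case: (tm u); case: (tm u.+1); case: (tm u.+2).
Qed.

Lemma tm_even_pal_center a b : a < b -> ~~ odd (b - a) -> tm_pal a b ->
  exists u, a + b = 4 * u.
Proof.
move=> lt_ab /negbTE even_ab pal_ab.
have {even_ab} even_len : (b - a) %% 2 = 0 by rewrite modn2 even_ab.
have [c ab_c] : exists c, a + b = 2 * c by exists ((a + b) %/ 2); lia.
have mid : tm (c - 1) = tm c by apply: (tm_palE pal_ab); lia.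
move: ab_c mid; elim/parity_cases: c => u ab_u; first by exists u; lia.
by rewrite addnK tm_2mul tm_2mul1; case: (tm u).
Qed.

Lemma tm_pal_shape i m : i < m -> tm_pal i m ->
  [\/ m = i + 1, m = i + 3 | exists u, i + m = 4 * u].
Proof.
move=> lt_im pal_im; case odd_len: (odd (m - i)); last first.
  by apply: Or33; apply: tm_even_pal_center; rewrite ?odd_len.
have {}odd_len : (m - i) %% 2 = 1 by rewrite modn2 odd_len.
have [d m_d] : exists d, m = i + 2 * d + 1 by exists ((m - i) %/ 2); lia.
case: d m_d => [|[|d]] m_d; [by apply: Or31; lia | by apply: Or32; lia | exfalso].
by apply: (@tm_no_pal5 (i + d)); apply: (tm_pal_shrink pal_im); lia.
Qed.

Lemma tm_pal_quarter i m k n : tm_pal i m -> i + m = 4 * (k + n) -> i <= 4 * k ->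
  tm_pal k n.
Proof. by move=> pal_im im_kn le_ik; apply/tm_pal_4mul/(tm_pal_shrink pal_im); lia. Qed.

Lemma tm_pal_quarter_grow i m k n : tm_pal i m -> i + m = 4 * (k + n) -> i < 4 * k ->
  tm_pal k.-1 (n + 1).
Proof.
move=> pal_im im_kn lt_ik.
have [le_kn | lt_nk] := leqP k n; last by apply: tm_pal_short; lia.
apply: tm_pal_grow; [lia | exact: tm_pal_quarter pal_im im_kn (ltnW lt_ik) |].
by rewrite -(tm_4mul3 k.-1) -(tm_4mul n); apply: (tm_palE pal_im); lia.
Qed.

(** * Palindromic length *)

Lemma pal_splitSP k s :
  reflect (exists p w, [/\ s = p ++ w, p != [::], palindrome p & pal_split k w])
          (pal_split k.+1 s).
Proof.
apply: (iffP hasP) => [[i] | [p [w [-> p_nil pal_p split_w]]]].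
  rewrite mem_iota => /andP[_ lt_is] /andP[pal_p split_w].
  exists (take i.+1 s), (drop i.+1 s); split; rewrite ?cat_take_drop //.
  by case: s lt_is {pal_p split_w}.
case: p p_nil pal_p => // x p _ pal_p.
exists (size p); first by rewrite mem_iota /= size_cat add0n ltnS leq_addr.
by rewrite take_size_cat // drop_size_cat // pal_p.
Qed.

Lemma pal_split_cat k l u v : pal_split k u -> pal_split l v -> pal_split (k + l) (u ++ v).
Proof.
elim: k u => [|k IH] u; first by move=> /eqP ->.
move=> /pal_splitSP[p [w [-> p_nil pal_p split_w]]] split_v.
by apply/pal_splitSP; exists p, (w ++ v); rewrite catA IH.
Qed.

Lemma pal_split1 p : p != [::] -> palindrome p -> pal_split 1 p.
Proof. by move=> p_nil pal_p; apply/pal_splitSP; exists p, [::]; rewrite cats0. Qed.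

Lemma pal_splitS_last k s : pal_split k.+1 s ->
  exists u v, [/\ s = u ++ v, v != [::], palindrome v & pal_split k u].
Proof.
elim: k s => [|k IH] s /pal_splitSP[p [w [-> p_nil pal_p split_w]]].
  by exists [::], p; move: split_w => /eqP ->; rewrite cats0.
have [u [v [-> v_nil pal_v split_u]]] := IH w split_w.
exists (p ++ u), v; rewrite catA; split=> //.
by rewrite -add1n; apply: pal_split_cat => //; apply: pal_split1.
Qed.

Lemma pal_length_split s : pal_split (pal_length s) s.
Proof. by rewrite /pal_length; case: ex_minnP. Qed.

Lemma pal_length_min s k : pal_split k s -> pal_length s <= k.
Proof. by rewrite /pal_length; case: ex_minnP => m _; apply. Qed.

Lemma pal_length_cat_pal u v : palindrome v -> pal_length (u ++ v) <= (pal_length u).+1.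
Proof.
move=> pal_v; have [-> | v_nil] := eqVneq v [::]; first by rewrite cats0.
by apply: pal_length_min; rewrite -addn1 pal_split_cat ?pal_length_split ?pal_split1.
Qed.

Lemma pal_length_last s : s != [::] -> exists u v,
  [/\ s = u ++ v, v != [::], palindrome v & pal_length s = (pal_length u).+1].
Proof.
move=> s_nil; have := pal_length_split s; have := @pal_length_min s.
case: (pal_length s) => [_ /eqP s0 | k min_s]; first by rewrite s0 in s_nil.
move=> /pal_splitS_last[u [v [s_uv v_nil pal_v split_u]]].
exists u, v; split=> //; apply/eqP.
rewrite eqn_leq [_.+1 <= k.+1]ltnS (pal_length_min split_u) andbT.
by apply: min_s; rewrite s_uv -addn1 pal_split_cat ?pal_length_split ?pal_split1.
Qed.

Lemma palindrome_mkseqP (f : nat -> bool) n :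
  reflect (forall i, i < n -> f i = f (n - i.+1)) (palindrome (mkseq f n)).
Proof.
apply: (iffP eqP) => [pal_f i lt_in | sym_f].
  by rewrite -(nth_mkseq false f lt_in) -[in LHS]pal_f nth_rev size_mkseq // nth_mkseq //; lia.
apply: (@eq_from_nth _ false); rewrite size_rev // size_mkseq => i lt_in.
rewrite nth_rev size_mkseq // !nth_mkseq ?(sym_f i) //; lia.
Qed.

Definition tm_factor (a b : nat) : seq bool := mkseq (fun i => tm (a + i)) (b - a).

Lemma palindrome_tm_factor a b : palindrome (tm_factor a b) <-> tm_pal a b.
Proof.
split=> [/palindrome_mkseqP sym i i_ab | pal_ab].
  by rewrite -(subnKC (proj1 (andP i_ab))) sym; [congr tm | ]; lia.
by apply/palindrome_mkseqP => i lt_i; apply: (tm_palE pal_ab); lia.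
Qed.

Lemma prefix_tm_cat a b : a <= b -> prefix_tm b = prefix_tm a ++ tm_factor a b.
Proof.
move=> le_ab; rewrite /prefix_tm /tm_factor /mkseq -{1}(subnKC le_ab).
by rewrite iotaD map_cat [0 + a]addnC iotaDl -map_comp.
Qed.

Lemma ppl_pal_le a b : a <= b -> tm_pal a b -> PPL_t b <= (PPL_t a).+1.
Proof.
move=> le_ab /palindrome_tm_factor pal_ab.
by rewrite /PPL_t (prefix_tm_cat le_ab) pal_length_cat_pal.
Qed.

Lemma ppl_last_pal b : 0 < b -> exists a, [/\ a < b, tm_pal a b & PPL_t b = (PPL_t a).+1].
Proof.
move=> b_gt0; have : prefix_tm b != [::] by rewrite -size_eq0 size_mkseq -lt0n.
move=> /pal_length_last[u [v [pre_b v_nil pal_v ppl_b]]].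
have size_uv : size u + size v = b by rewrite -size_cat -pre_b size_mkseq.
have le_ub : size u <= b by rewrite -size_uv leq_addr.
have /andP[/eqP pre_u /eqP fac_v] : (u == prefix_tm (size u)) && (v == tm_factor (size u) b).
  by rewrite -eqseq_cat ?size_mkseq // -prefix_tm_cat // pre_b.
exists (size u); split; last by rewrite /PPL_t ppl_b -pre_u.
  by rewrite -size_uv -addn1 leq_add2l lt0n size_eq0.
by apply/palindrome_tm_factor; rewrite -fac_v.
Qed.

Lemma ppl_succ_le b : PPL_t (b + 1) <= PPL_t b + 1.
Proof. by rewrite !addn1; apply: ppl_pal_le; [apply: leqnSn | apply: tm_pal_short]. Qed.

Lemma ppl_le_pred n : PPL_t n <= PPL_t n.-1 + 1.
Proof. by case: n => [|n] /=; [rewrite addn1 | rewrite -[n.+1]addn1 ppl_succ_le]. Qed.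

Lemma ppl_add_le b r : PPL_t (b + r) <= PPL_t b + r.
Proof.
elim: r => [|r IH]; first by rewrite !addn0.
by rewrite -[r.+1]addn1 !addnA (leq_trans (ppl_succ_le _)) // leq_add2r.
Qed.

Lemma ppl_4mul_sub_le n r : r <= 2 -> PPL_t (4 * n - r) <= PPL_t n + r.
Proof.
elim/ltn_ind: n r => n IH r le_r2.
have [-> | n_gt0] := posnP n; first by rewrite leq_addr.
have [a [lt_an /tm_pal_4mul pal4 ppl_n]] := ppl_last_pal n_gt0.
have pal_r : tm_pal (4 * a + r) (4 * n - r) by apply: (tm_pal_shrink pal4); lia.
have := ppl_pal_le _ pal_r; have := ppl_add_le (4 * a) r; have := IH a lt_an 0.
rewrite subn0; lia.
Qed.

Lemma ppl_4mul_le n : PPL_t (4 * n) <= PPL_t n.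
Proof. by rewrite -[4 * n]subn0 -[PPL_t n]addn0 ppl_4mul_sub_le. Qed.

Lemma ppl_4mul2_le n : PPL_t (4 * n + 2) <= PPL_t (n + 1) + 2.
Proof. by rewrite (_ : 4 * n + 2 = 4 * (n + 1) - 2) ?ppl_4mul_sub_le //; lia. Qed.

Lemma ppl_4mul3_le n : PPL_t (4 * n + 3) <= PPL_t (n + 1) + 1.
Proof. by rewrite (_ : 4 * n + 3 = 4 * (n + 1) - 1) ?ppl_4mul_sub_le //; lia. Qed.

(* [n'] names [n + 1], so that the instance at [n.-1] mentions [PPL_t n] itself. *)
Definition ppl_recursion_at (m : nat) : Prop := forall n n', n' = n + 1 ->
  [/\ m = 4 * n -> PPL_t m = PPL_t n,
      m = 4 * n + 1 -> PPL_t m = PPL_t n + 1,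
      m = 4 * n + 2 -> PPL_t m = minn (PPL_t n) (PPL_t n') + 2
    & m = 4 * n + 3 -> PPL_t m = PPL_t n' + 1].

Section LowerBounds.

Variables (i m : nat).
Hypotheses (lt_im : i < m) (pal_im : tm_pal i m) (ppl_m : PPL_t m = (PPL_t i).+1).
Hypothesis rec_i : ppl_recursion_at i.

Lemma ppl_4mul_ge n : m = 4 * n -> PPL_t n <= PPL_t m.
Proof.
move=> m4n; rewrite ppl_m; case: (tm_pal_shape lt_im pal_im) => [m_i1 | m_i3 | [u iu]].
- have [_ _ _ ppl_i] := @rec_i n.-1 n ltac:(lia).
  by rewrite ppl_i; lia.
- have [_ ppl_i _ _] := @rec_i n.-1 n ltac:(lia).
  by have := ppl_le_pred n; rewrite ppl_i; lia.
- have pal_kn : tm_pal (u - n) n by apply: (tm_pal_quarter pal_im); lia.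
  have := ppl_pal_le _ pal_kn.
  have [ppl_i _ _ _] := @rec_i (u - n) _ erefl.
  by rewrite ppl_i; lia.
Qed.

Lemma ppl_4mul1_ge n : m = 4 * n + 1 -> PPL_t n + 1 <= PPL_t m.
Proof.
move=> m4n; rewrite ppl_m; case: (tm_pal_shape lt_im pal_im) => [m_i1 | m_i3 | [u iu]].
- have [ppl_i _ _ _] := @rec_i n _ erefl.
  by rewrite ppl_i; lia.
- have [_ _ ppl_i _] := @rec_i n.-1 n ltac:(lia).
  by have := ppl_le_pred n; rewrite ppl_i; lia.
- have pal_kn : tm_pal (u - n) n by apply: (tm_pal_quarter pal_im); lia.
  have := ppl_pal_le _ pal_kn.
  have [_ _ _ ppl_i] := @rec_i (u - n).-1 (u - n) ltac:(lia).
  by rewrite ppl_i; lia.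
Qed.

Lemma ppl_4mul2_ge n : m = 4 * n + 2 -> minn (PPL_t n) (PPL_t (n + 1)) + 2 <= PPL_t m.
Proof.
move=> m4n; rewrite ppl_m; case: (tm_pal_shape lt_im pal_im) => [m_i1 | m_i3 | [u iu]].
- have [_ ppl_i _ _] := @rec_i n _ erefl.
  by rewrite ppl_i; lia.
- have [_ _ _ ppl_i] := @rec_i n.-1 n ltac:(lia).
  by rewrite ppl_i; lia.
- have pal_kn : tm_pal (u - n) n by apply: (tm_pal_quarter pal_im); lia.
  have pal_kn1 : tm_pal (u - n).-1 (n + 1) by apply: (tm_pal_quarter_grow pal_im); lia.
  have := ppl_pal_le _ pal_kn; have := ppl_pal_le _ pal_kn1.
  have [_ _ ppl_i _] := @rec_i (u - n).-1 (u - n) ltac:(lia).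
  by rewrite ppl_i; lia.
Qed.

Lemma ppl_4mul3_ge n : m = 4 * n + 3 -> PPL_t (n + 1) + 1 <= PPL_t m.
Proof.
move=> m4n; rewrite ppl_m; case: (tm_pal_shape lt_im pal_im) => [m_i1 | m_i3 | [u iu]].
- have [_ _ ppl_i _] := @rec_i n _ erefl.
  by have := ppl_succ_le n; rewrite ppl_i; lia.
- have : tm (4 * n) = tm (4 * n + 2) by apply: (tm_palE pal_im); lia.
  by rewrite tm_4mul tm_4mul2; case: (tm n).
- have pal_kn1 : tm_pal (u - n).-1 (n + 1) by apply: (tm_pal_quarter_grow pal_im); lia.
  have := ppl_pal_le _ pal_kn1.
  have [_ ppl_i _ _] := @rec_i (u - n).-1 (u - n) ltac:(lia).
  by rewrite ppl_i; lia.
Qed.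

End LowerBounds.

Lemma ppl_recursion m : ppl_recursion_at m.
Proof.
elim/ltn_ind: m => m IH n _ ->.
have [m0 | m_gt0] := posnP m.
  by split=> m_n; [rewrite (_ : n = 0) ?m0 //; lia | lia ..].
have [i [lt_im pal_im ppl_m]] := ppl_last_pal m_gt0.
have rec_i := IH i lt_im.
have := ppl_4mul_le n; have := ppl_succ_le (4 * n); have := ppl_add_le (4 * n) 2.
have := ppl_4mul2_le n; have := ppl_4mul3_le n.
split=> m_n; subst m.
- by have := ppl_4mul_ge lt_im pal_im ppl_m rec_i erefl; lia.
- by have := ppl_4mul1_ge lt_im pal_im ppl_m rec_i erefl; lia.
- by have := ppl_4mul2_ge lt_im pal_im ppl_m rec_i erefl; lia.
- by have := ppl_4mul3_ge lt_im pal_im ppl_m rec_i erefl; lia.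
Qed.

Theorem theorem4 : forall n : nat,
  [/\ PPL_t (4 * n) = PPL_t n,
      PPL_t (4 * n + 1) = PPL_t n + 1,
      PPL_t (4 * n + 2) = minn (PPL_t n) (PPL_t (n + 1)) + 2
    & PPL_t (4 * n + 3) = PPL_t (n + 1) + 1].
Proof.
move=> n; split.
- by case: (@ppl_recursion (4 * n) n _ erefl) => + _ _ _; apply.
- by case: (@ppl_recursion (4 * n + 1) n _ erefl) => _ + _ _; apply.
- by case: (@ppl_recursion (4 * n + 2) n _ erefl) => _ _ + _; apply.
- by case: (@ppl_recursion (4 * n + 3) n _ erefl) => _ _ _ +; apply.
Qed.
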